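(* Let $U$ and $V$ be linear subspaces of $\mathbb{R}^d$ such that $U\cap V^\perp=\{0\}$. Then there exists a positive definite linear map $H:\mathbb{R}^d\to\mathbb{R}^d$ such that $H(U)\subset V$. *)

(* R^d is modelled by row vectors 'rV[R]_d over a real field R;
   a linear subspace is the row space of a matrix (mxalgebra, %MS scope);
   a linear map R^d -> R^d is a square matrix H acting by x |-> x *m H. *)
From mathcomp Require Import all_boot all_order all_algebra.
Set Implicit Arguments. Unset Strict Implicit. Unset Printing Implicit Defensive.
Import Order.TTheory GRing.Theory Num.Theory.
Local Open Scope ring_scope.

Definition dotv (R : realFieldType) (d : nat) (x y : 'rV[R]_d) : R :=
  (x *m y^T) 0 0.

Definition in_perp (R : realFieldType) (d : nat) (V : 'M[R]_d) (x : 'rV[R]_d) : Prop :=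
  forall v : 'rV[R]_d, (v <= V)%MS -> dotv x v = 0.

Definition cap_perp_trivial (R : realFieldType) (d : nat) (U V : 'M[R]_d) : Prop :=
  forall u : 'rV[R]_d, (u <= U)%MS -> in_perp V u -> u = 0.

Definition pos_def (R : realFieldType) (d : nat) (H : 'M[R]_d) : Prop :=
  H^T = H /\ forall x : 'rV[R]_d, x != 0 -> 0 < dotv (x *m H) x.

(** With [C] a matrix whose rows span the orthogonal complement of [U], take
    [H = V^T V + C^T C], the Gram matrix of the stacked matrix [W = (V; C)].
    It maps [U] into [V] because [U C^T = 0], and it is positive definite as
    soon as [x W^T = 0] forces [x = 0]: such an [x] is orthogonal to [C], hence
    lies in [U], and is orthogonal to [V], so it vanishes by hypothesis. *)
From mathcomp Require Import all_boot all_order all_algebra.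
Set Implicit Arguments. Unset Strict Implicit. Unset Printing Implicit Defensive.
Import Order.TTheory GRing.Theory Num.Theory.
Local Open Scope ring_scope.

Section Annihilator.
Variables (F : fieldType) (n : nat).

Definition orthmx m (A : 'M[F]_(m, n)) : 'M[F]_n := kermx A^T.

Lemma sub_orthmx p m (B : 'M[F]_(p, n)) (A : 'M_(m, n)) :
  (B <= orthmx A)%MS = (B *m A^T == 0).
Proof. exact: sub_kermx. Qed.

Lemma mxrank_orthmx m (A : 'M[F]_(m, n)) : \rank (orthmx A) = (n - \rank A)%N.
Proof. by rewrite mxrank_ker mxrank_tr. Qed.

Lemma orthmxK m (A : 'M[F]_(m, n)) : (orthmx (orthmx A) :=: A)%MS.
Proof.
have sA : (A <= orthmx (orthmx A))%MS.
  by rewrite sub_orthmx -[_ *m _]trmxK trmx_mul trmxK mulmx_ker trmx0.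
apply/eqmx_sym/eqmxP; rewrite -(mxrank_leqif_eq sA) !mxrank_orthmx.
by rewrite subKn ?rank_leq_col.
Qed.

End Annihilator.

Section Gram.
Variable R : realFieldType.

Lemma dotvvE m (x : 'rV[R]_m) : dotv x x = \sum_i x 0 i ^+ 2.
Proof. by rewrite /dotv mxE; apply: eq_bigr => i _; rewrite mxE expr2. Qed.

Lemma dotvv_gt0 m (x : 'rV[R]_m) : (0 < dotv x x) = (x != 0).
Proof.
rewrite dotvvE lt_def psumr_eq0 => [|i _]; last exact: sqr_ge0.
rewrite sumr_ge0 ?andbT => [|i _]; last exact: sqr_ge0.
congr (~~ _); apply/allP/eqP => [x0 | -> i _]; last by rewrite mxE sqrf_eq0 eqxx.
apply/rowP => i; rewrite mxE; apply/eqP; rewrite -sqrf_eq0.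
exact: x0 (mem_index_enum i).
Qed.

Lemma dotv_mulmxl m p (x : 'rV[R]_m) (A : 'M_(m, p)) (y : 'rV_p) :
  dotv (x *m A) y = dotv x (y *m A^T).
Proof. by rewrite /dotv trmx_mul trmxK mulmxA. Qed.

Lemma in_perpP d (V : 'M[R]_d) (x : 'rV_d) :
  reflect (in_perp V x) (x <= orthmx V)%MS.
Proof.
rewrite sub_orthmx; apply: (iffP eqP) => [xV v /submxP[w ->] | xV].
  by rewrite /dotv trmx_mul mulmxA xV mul0mx mxE.
apply/rowP => i; rewrite [RHS]mxE -(xV _ (row_sub i V)) /dotv !mxE.
by apply: eq_bigr => j _; rewrite !mxE.
Qed.

Lemma gram_pos_def d m (W : 'M[R]_(m, d)) : row_free W^T -> pos_def (W^T *m W).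
Proof.
move=> freeW; split=> [|x x_neq0]; first by rewrite trmx_mul trmxK.
rewrite mulmxA dotv_mulmxl dotvv_gt0; apply: contraNneq x_neq0 => xW0.
by apply/eqP/(row_free_inj freeW); rewrite xW0 mul0mx.
Qed.

End Gram.

Theorem lemma7 (R : realFieldType) (d : nat) (U V : 'M[R]_d) :
  cap_perp_trivial U V ->
  exists H : 'M[R]_d, pos_def H /\ (U *m H <= V)%MS.
Proof.
move=> capUV; set W := col_mx V (orthmx U).
have freeW : row_free W^T.
  apply: inj_row_free => x; rewrite tr_col_mx mul_mx_row => /eqP.
  rewrite row_mx_eq0 -!sub_orthmx orthmxK => /andP[/in_perpP xV xU].
  exact: capUV.
have UC0 : U *m (orthmx U)^T = 0 by apply/eqP; rewrite -sub_orthmx orthmxK.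
exists (W^T *m W); split; first exact: gram_pos_def.
by rewrite mulmxA tr_col_mx mul_mx_row mul_row_col UC0 mul0mx addr0 submxMl.
Qed.
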